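(* Let $\alpha\ge0$, $\mu\ge0$ and $n\in\mathbb{N}$. For every $f\in C_B([0,\infty))$, the function $x\mapsto T_n(f;x)$ belongs to $C_B([0,\infty))$, and $\|T_n(f)\|\le\|f\|$.
   Context: $C_B([0,\infty))$ is the space of bounded continuous real functions on $[0,\infty)$ with the norm $\|f\|=\sup_{x\ge0}|f(x)|$. For $\mu>-\tfrac12$ define $\gamma_\mu(2k)=\dfrac{2^{2k}k!\,\Gamma(k+\mu+1/2)}{\Gamma(\mu+1/2)}$ and $\gamma_\mu(2k+1)=\dfrac{2^{2k+1}k!\,\Gamma(k+\mu+3/2)}{\Gamma(\mu+1/2)}$, $k\ge0$; $e_\mu(x)=\sum_{k\ge0} x^k/\gamma_\mu(k)$; $\theta_k=0$ if $k$ is even and $\theta_k=1$ if $k$ is odd. Let $h_k^\mu(\xi,\alpha)=\gamma_\mu(k)\sum_{j=0}^{\lfloor k/2\rfloor}\dfrac{\alpha^j\xi^{k-2j}}{j!\,\gamma_\mu(k-2j)}$. For $\alpha\ge0,\mu\ge0$, $n\in\mathbb{N}$ and $x\in[0,\infty)$ define $$T_n(f;x)=\frac{1}{e^{\alpha x^2}e_\mu(nx)}\sum_{k=0}^\infty \frac{h_k^\mu(n,\alpha)}{\gamma_\mu(k)}x^k f\!\left(\frac{k+2\mu\theta_k}{n}\right).$$ *)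

From Stdlib Require Import Reals Lra.
From Coquelicot Require Import Coquelicot.
Open Scope R_scope.

(* Gamma ratio  Gamma(a + k) / Gamma(a)  for a > 0, i.e. the rising factorial
   (Pochhammer symbol)  a (a+1) ... (a+k-1). *)
Fixpoint gamma_ratio (a : R) (k : nat) : R :=
  match k with
  | O => 1
  | S k' => gamma_ratio a k' * (a + INR k')
  end.

Definition gamma_mu (mu : R) (m : nat) : R :=
  let k := Nat.div2 m in
  if Nat.even m
  then 2 ^ (2 * k) * INR (Factorial.fact k) * gamma_ratio (mu + / 2) k
  else 2 ^ (2 * k + 1) * INR (Factorial.fact k) * gamma_ratio (mu + / 2) (S k).

Definition e_mu (mu x : R) : R := Series (fun k => x ^ k / gamma_mu mu k).

Definition theta (k : nat) : R := if Nat.even k then 0 else 1.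

Definition h_mu (mu : R) (k : nat) (xi alpha : R) : R :=
  gamma_mu mu k *
  sum_f_R0 (fun j => alpha ^ j * xi ^ (k - 2 * j) /
                     (INR (Factorial.fact j) * gamma_mu mu (k - 2 * j))) (Nat.div2 k).

Definition T_term (alpha mu : R) (n : nat) (f : R -> R) (x : R) (k : nat) : R :=
  h_mu mu k (INR n) alpha / gamma_mu mu k * x ^ k
  * f ((INR k + 2 * mu * theta k) / INR n).

Definition T_op (alpha mu : R) (n : nat) (f : R -> R) (x : R) : R :=
  / (exp (alpha * x ^ 2) * e_mu mu (INR n * x)) * Series (T_term alpha mu n f x).

Definition continuous_on_nonneg (f : R -> R) : Prop :=
  forall x, 0 <= x -> forall eps, 0 < eps -> exists delta, 0 < delta /\
    forall y, 0 <= y -> Rabs (y - x) < delta -> Rabs (f y - f x) < eps.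

Definition bounded_on_nonneg (f : R -> R) : Prop :=
  exists M, forall x, 0 <= x -> Rabs (f x) <= M.

Definition in_CB (f : R -> R) : Prop :=
  continuous_on_nonneg f /\ bounded_on_nonneg f.

Definition sup_norm (f : R -> R) : Rbar :=
  Lub_Rbar (fun r => exists x, 0 <= x /\ r = Rabs (f x)).

From Stdlib Require Import Reals Lra Lia FunctionalExtensionality.
From Coquelicot Require Import Coquelicot.
Open Scope R_scope.

(* The weights c_k(x) = h_k^mu(n, alpha) x^k / gamma_mu(k) of T_n are the Cauchy
   product of the Taylor coefficients of exp(alpha x^2), placed at even indices,
   with the terms (n x)^m / gamma_mu(m) of e_mu(n x).  They are nonnegative and,
   since gamma_mu(m) >= m!, both factors converge, so
   sum_k c_k(x) <= exp(alpha x^2) e_mu(n x): T_n is a positive operator with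
   T_n 1 <= 1, and |T_n(f;x)| <= ||f|| because every node (k + 2 mu theta_k)/n
   lies in [0,oo).  The same domination, at an arbitrary radius r, shows that the
   numerator of T_n f is a power series with infinite radius of convergence, so
   T_n f is continuous as a quotient by a continuous positive function. *)

Lemma nonneg_series_bounded (a : nat -> R) (B : R) :
  (forall k, 0 <= a k) -> (forall N, sum_f_R0 a N <= B) ->
  ex_series a /\ Series a <= B.
Proof.
  intros Ha HB.
  assert (Hgrow : Un_growing (sum_f_R0 a)) by (intro N; simpl; specialize (Ha (S N)); lra).
  assert (Hub : has_ub (sum_f_R0 a)) by (exists B; intros x [N ->]; apply HB).
  destruct (growing_cv _ Hgrow Hub) as [l Hl].
  apply is_series_Reals in Hl.
  split; [exists l; exact Hl|].
  rewrite (is_series_unique _ _ Hl).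
  apply (is_lim_seq_le (sum_n a) (fun _ => B) l B); [|exact Hl|apply is_lim_seq_const].
  intro N; rewrite sum_n_Reals; apply HB.
Qed.

Lemma sum_f_R0_even_indices (a : nat -> R) (l : nat) :
  sum_f_R0 (fun i => if Nat.even i then a i else 0) l
    = sum_f_R0 (fun j => a (2 * j)%nat) (Nat.div2 l).
Proof.
  set (ev := fun i => if Nat.even i then a i else 0).
  assert (Hsucc : forall k, sum_f_R0 ev (S (2 * k)) = sum_f_R0 ev (2 * k)).
  { intro k; rewrite tech5; unfold ev.
    replace (S (2 * k)) with (2 * k + 1)%nat by lia; rewrite Nat.even_odd; ring. }
  assert (Heven : forall k, sum_f_R0 ev (2 * k) = sum_f_R0 (fun j => a (2 * j)%nat) k).
  { induction k as [|k IH]; [reflexivity|].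
    replace (2 * S k)%nat with (S (S (2 * k))) by lia.
    rewrite tech5, Hsucc, IH, tech5; unfold ev.
    rewrite Nat.even_succ_succ, Nat.even_even.
    replace (S (S (2 * k))) with (2 * S k)%nat by lia; reflexivity. }
  destruct (Nat.Even_or_Odd l) as [[k ->]|[k ->]].
  - rewrite Nat.div2_double; apply Heven.
  - replace (2 * k + 1)%nat with (S (2 * k)) by lia.
    rewrite Nat.div2_succ_double, Hsucc; apply Heven.
Qed.

Lemma CV_radius_infinite (a : nat -> R) :
  (forall r, 0 <= r -> CV_disk a r) -> forall x, Rbar_lt (Rabs x) (CV_radius a).
Proof.
  intros Hdisk x.
  assert (Hle : Rbar_le (Rabs x + 1) (CV_radius a)).
  { apply (proj1 (Lub_Rbar_correct (CV_disk a))), Hdisk.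
    pose proof (Rabs_pos x); lra. }
  revert Hle; destruct (CV_radius a); simpl; intros; [lra|exact I|exact Hle].
Qed.

Lemma continuity_pt_on_nonneg (g : R -> R) :
  (forall x, 0 <= x -> continuity_pt g x) -> continuous_on_nonneg g.
Proof.
  intros Hg x Hx eps Heps.
  destruct (Hg x Hx eps Heps) as [d [Hd Hball]].
  exists d; split; [exact Hd|]; intros y _ Hyx.
  destruct (Req_dec y x) as [->|Hne].
  - rewrite Rminus_diag, Rabs_R0; lra.
  - apply Hball; repeat split; auto.
Qed.

Lemma sup_norm_le (f g : R -> R) :
  (forall M, (forall x, 0 <= x -> Rabs (f x) <= M) -> forall x, 0 <= x -> Rabs (g x) <= M) ->
  Rbar_le (sup_norm g) (sup_norm f).
Proof.
  intro Hfg; unfold sup_norm.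
  apply (proj2 (Lub_Rbar_correct _)); intros r [x [Hx ->]].
  destruct (Lub_Rbar_correct (fun r => exists x, 0 <= x /\ r = Rabs (f x))) as [Hub _].
  revert Hub; destruct (Lub_Rbar _) as [S| |]; simpl; intro Hub; [|exact I|].
  - apply (Hfg S); [|exact Hx]; intros y Hy; apply (Hub (Rabs (f y))); exists y; auto.
  - apply (Hub (Rabs (f 0))); exists 0; split; [lra|reflexivity].
Qed.

Lemma gamma_ratio_pos (a : R) (k : nat) : 0 < a -> 0 < gamma_ratio a k.
Proof.
  intro Ha; induction k as [|k IH]; simpl; [lra|].
  pose proof (pos_INR k); apply Rmult_lt_0_compat; lra.
Qed.

Lemma gamma_mu_even (mu : R) (k : nat) :
  gamma_mu mu (2 * k) = 2 ^ (2 * k) * INR (Factorial.fact k) * gamma_ratio (mu + / 2) k.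
Proof. unfold gamma_mu; rewrite Nat.div2_double, Nat.even_even; reflexivity. Qed.

Lemma gamma_mu_odd (mu : R) (k : nat) :
  gamma_mu mu (S (2 * k))
  = 2 ^ (2 * k + 1) * INR (Factorial.fact k) * gamma_ratio (mu + / 2) (S k).
Proof.
  unfold gamma_mu; rewrite Nat.div2_succ_double.
  replace (S (2 * k)) with (2 * k + 1)%nat by lia; rewrite Nat.even_odd; reflexivity.
Qed.

Section GammaMu.

Variable mu : R.
Hypothesis Hmu : 0 <= mu.

Lemma gamma_mu_pos (m : nat) : 0 < gamma_mu mu m.
Proof.
  assert (Ha : 0 < mu + / 2) by lra.
  pose proof (INR_fact_lt_0 (Nat.div2 m)).
  pose proof (gamma_ratio_pos _ (Nat.div2 m) Ha).
  pose proof (gamma_ratio_pos _ (S (Nat.div2 m)) Ha).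
  unfold gamma_mu; destruct (Nat.even m);
    apply Rmult_lt_0_compat; auto; apply Rmult_lt_0_compat; auto; apply pow_lt; lra.
Qed.

(* gamma_mu(2k+1) / gamma_mu(2k) = 2k + 1 + 2 mu and gamma_mu(2k+2) / gamma_mu(2k+1) = 2k + 2. *)
Lemma gamma_mu_succ_ge (m : nat) : INR (S m) * gamma_mu mu m <= gamma_mu mu (S m).
Proof.
  destruct (Nat.Even_or_Odd m) as [[k ->]|[k ->]].
  - rewrite gamma_mu_even, gamma_mu_odd; simpl gamma_ratio.
    set (P := 2 ^ (2 * k)); set (F := INR (Factorial.fact k));
      set (G := gamma_ratio (mu + / 2) k).
    assert (HPFG : 0 <= P * F * G).
    { pose proof (INR_fact_lt_0 k); pose proof (gamma_ratio_pos (mu + / 2) k ltac:(lra)).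
      pose proof (pow_lt 2 (2 * k) ltac:(lra)).
      repeat apply Rmult_le_pos; unfold P, F, G; lra. }
    assert (E : 2 ^ (2 * k + 1) * F * (G * (mu + / 2 + INR k)) - INR (S (2 * k)) * (P * F * G)
                = P * F * G * (2 * mu)).
    { unfold P; rewrite pow_add, S_INR, mult_INR; simpl; field. }
    nra.
  - replace (S (2 * k + 1)) with (2 * S k)%nat by lia.
    replace (2 * k + 1)%nat with (S (2 * k)) by lia.
    rewrite gamma_mu_even, gamma_mu_odd.
    replace (2 * S k)%nat with (2 * k + 2)%nat by lia.
    rewrite !pow_add, fact_simpl, mult_INR, !S_INR.
    replace (2 * k + 2)%nat with (S (S (2 * k))) by lia.
    rewrite !S_INR, mult_INR; simpl INR; right; ring.
Qed.

Lemma fact_le_gamma_mu (m : nat) : INR (Factorial.fact m) <= gamma_mu mu m.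
Proof.
  induction m as [|m IH]; [unfold gamma_mu; simpl; lra|].
  rewrite fact_simpl, mult_INR.
  eapply Rle_trans; [|apply gamma_mu_succ_ge].
  apply Rmult_le_compat_l; [apply pos_INR|exact IH].
Qed.

Definition e_mu_term (w : R) (m : nat) : R := w ^ m / gamma_mu mu m.

Lemma e_mu_term_nonneg (w : R) (m : nat) : 0 <= w -> 0 <= e_mu_term w m.
Proof.
  intro Hw; pose proof (gamma_mu_pos m).
  apply Rmult_le_pos; [apply pow_le; lra|left; apply Rinv_0_lt_compat; lra].
Qed.

Lemma e_mu_series (w : R) : 0 <= w -> ex_series (e_mu_term w) /\ e_mu mu w <= exp w.
Proof.
  intro Hw; apply nonneg_series_bounded; [intro; apply e_mu_term_nonneg, Hw|].
  intro N; eapply Rle_trans; [|apply (exp_ge_taylor w N Hw)].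
  apply sum_Rle; intros m _; unfold e_mu_term.
  pose proof (INR_fact_lt_0 m); pose proof (fact_le_gamma_mu m).
  apply Rmult_le_compat_l; [apply pow_le; lra|apply Rinv_le_contravar; lra].
Qed.

Lemma e_mu_ge_1 (w : R) : 0 <= w -> 1 <= e_mu mu w.
Proof.
  intro Hw.
  pose proof (Series_correct _ (proj1 (e_mu_series w Hw))) as Hs.
  apply is_series_Reals in Hs.
  pose proof (sum_incr _ 0 _ Hs (fun m => e_mu_term_nonneg w m Hw)) as H0.
  simpl sum_f_R0 in H0.
  replace (e_mu_term w 0) with 1 in H0 by (unfold e_mu_term, gamma_mu; simpl; field).
  exact H0.
Qed.

End GammaMu.

Definition exp_even_coef (z : R) (i : nat) : R :=
  if Nat.even i then z ^ Nat.div2 i / INR (Factorial.fact (Nat.div2 i)) else 0.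

Lemma exp_even_coef_nonneg (z : R) (i : nat) : 0 <= z -> 0 <= exp_even_coef z i.
Proof.
  intro Hz; unfold exp_even_coef; destruct (Nat.even i); [|lra].
  pose proof (INR_fact_lt_0 (Nat.div2 i)).
  apply Rmult_le_pos; [apply pow_le; lra|left; apply Rinv_0_lt_compat; lra].
Qed.

Lemma exp_even_coef_series (z : R) :
  0 <= z -> ex_series (exp_even_coef z) /\ Series (exp_even_coef z) <= exp z.
Proof.
  intro Hz; apply nonneg_series_bounded; [intro; apply exp_even_coef_nonneg, Hz|].
  intro N; unfold exp_even_coef.
  rewrite (sum_f_R0_even_indices (fun i => z ^ Nat.div2 i / INR (Factorial.fact (Nat.div2 i)))).
  rewrite (sum_eq _ (fun j => z ^ j / INR (Factorial.fact j)));
    [apply exp_ge_taylor, Hz|intros j _; rewrite Nat.div2_double; reflexivity].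
Qed.

Section Weights.

Variables (alpha mu : R) (n : nat).
Hypotheses (Halpha : 0 <= alpha) (Hmu : 0 <= mu) (Hn : (0 < n)%nat).

Definition T_weight (x : R) (k : nat) : R := h_mu mu k (INR n) alpha / gamma_mu mu k * x ^ k.

Lemma T_term_weight (f : R -> R) (x : R) (k : nat) :
  T_term alpha mu n f x k = T_weight x k * f ((INR k + 2 * mu * theta k) / INR n).
Proof. reflexivity. Qed.

Lemma T_weight_cauchy_product (x : R) (k : nat) :
  T_weight x k
  = sum_f_R0 (fun i => exp_even_coef (alpha * x ^ 2) i * e_mu_term mu (INR n * x) (k - i)) k.
Proof.
  rewrite (sum_eq _ (fun i => if Nat.even i then
      (alpha * x ^ 2) ^ Nat.div2 i / INR (Factorial.fact (Nat.div2 i))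
      * e_mu_term mu (INR n * x) (k - i) else 0))
    by (intros i _; unfold exp_even_coef; destruct (Nat.even i); ring).
  rewrite sum_f_R0_even_indices; unfold T_weight, h_mu.
  pose proof (gamma_mu_pos mu Hmu k).
  replace (gamma_mu mu k * _ / gamma_mu mu k * x ^ k)
    with (x ^ k * sum_f_R0 (fun j => alpha ^ j * INR n ^ (k - 2 * j) /
      (INR (Factorial.fact j) * gamma_mu mu (k - 2 * j))) (Nat.div2 k)) by (field; lra).
  rewrite scal_sum; apply sum_eq; intros j Hj.
  rewrite Nat.div2_double.
  assert (Hk : (2 * j <= k)%nat) by (pose proof (Nat.div2_odd k); lia).
  replace (x ^ k) with ((x ^ 2) ^ j * x ^ (k - 2 * j))
    by (rewrite <- pow_mult, <- pow_add; f_equal; lia).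
  unfold e_mu_term; rewrite !Rpow_mult_distr.
  pose proof (gamma_mu_pos mu Hmu (k - 2 * j)); pose proof (INR_fact_lt_0 j).
  field; lra.
Qed.

Lemma T_weight_series (x : R) : 0 <= x ->
  (forall k, 0 <= T_weight x k) /\ ex_series (T_weight x) /\
  Series (T_weight x) <= exp (alpha * x ^ 2) * e_mu mu (INR n * x).
Proof.
  intro Hx.
  assert (Hz : 0 <= alpha * x ^ 2) by (apply Rmult_le_pos; [lra|apply pow_le; lra]).
  assert (Hw : 0 <= INR n * x) by (apply Rmult_le_pos; [apply pos_INR|lra]).
  destruct (exp_even_coef_series _ Hz) as [Ea Sa].
  destruct (e_mu_series mu Hmu _ Hw) as [Ev Sv].
  pose proof (e_mu_ge_1 mu Hmu _ Hw).
  pose proof (is_series_mult_pos _ _ _ _ (Series_correct _ Ea) (Series_correct _ Ev)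
     (fun k => exp_even_coef_nonneg _ k Hz) (fun k => e_mu_term_nonneg mu Hmu _ k Hw)) as Hprod.
  apply (is_series_ext _ (T_weight x)) in Hprod;
    [|intro k; symmetry; apply T_weight_cauchy_product].
  split; [|split; [eexists; exact Hprod|]].
  - intro k; rewrite T_weight_cauchy_product; apply cond_pos_sum; intro i.
    apply Rmult_le_pos; [apply exp_even_coef_nonneg|apply e_mu_term_nonneg]; lra.
  - rewrite (is_series_unique _ _ Hprod); apply Rmult_le_compat_r; [|exact Sa].
    unfold e_mu in *; lra.
Qed.

Lemma node_nonneg (k : nat) : 0 <= (INR k + 2 * mu * theta k) / INR n.
Proof.
  assert (0 <= theta k) by (unfold theta; destruct (Nat.even k); lra).
  pose proof (pos_INR k); pose proof (lt_0_INR n ltac:(lia)).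
  apply Rmult_le_pos; [nra|left; apply Rinv_0_lt_compat; lra].
Qed.

Section BoundedData.

Variables (f : R -> R) (M : R).
Hypothesis HfM : forall y, 0 <= y -> Rabs (f y) <= M.

Lemma T_term_abs_le (x : R) (k : nat) : 0 <= x ->
  Rabs (T_term alpha mu n f x k) <= M * T_weight x k.
Proof.
  intro Hx; pose proof (proj1 (T_weight_series x Hx) k) as Hc.
  rewrite T_term_weight, Rabs_mult, (Rabs_pos_eq _ Hc), Rmult_comm.
  apply Rmult_le_compat_r; [exact Hc|apply HfM, node_nonneg].
Qed.

Lemma ex_series_abs_T_term (x : R) : 0 <= x ->
  ex_series (fun k => Rabs (T_term alpha mu n f x k)).
Proof.
  intro Hx.
  apply (@ex_series_le R_AbsRing R_CompleteNormedModule _ (fun k => M * T_weight x k)).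
  - intro k; change (Rabs (Rabs (T_term alpha mu n f x k)) <= M * T_weight x k).
    rewrite Rabs_Rabsolu; apply T_term_abs_le, Hx.
  - exact (ex_series_scal_l M _ (proj1 (proj2 (T_weight_series x Hx)))).
Qed.

Lemma T_op_abs_le (x : R) : 0 <= x -> Rabs (T_op alpha mu n f x) <= M.
Proof.
  intro Hx; destruct (T_weight_series x Hx) as [_ [Ce Cs]].
  assert (HM : 0 <= M) by (pose proof (HfM 0 (Rle_refl 0)); pose proof (Rabs_pos (f 0)); lra).
  assert (HN : Rabs (Series (T_term alpha mu n f x))
               <= M * (exp (alpha * x ^ 2) * e_mu mu (INR n * x))).
  { eapply Rle_trans; [apply Series_Rabs, ex_series_abs_T_term, Hx|].
    eapply Rle_trans; [apply (Series_le _ (fun k => M * T_weight x k))|].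
    - intro k; split; [apply Rabs_pos|apply T_term_abs_le, Hx].
    - exact (ex_series_scal_l M _ Ce).
    - rewrite Series_scal_l; apply Rmult_le_compat_l; assumption. }
  assert (HD : 0 < exp (alpha * x ^ 2) * e_mu mu (INR n * x)).
  { pose proof (e_mu_ge_1 mu Hmu (INR n * x) ltac:(apply Rmult_le_pos; [apply pos_INR|lra])).
    pose proof (exp_pos (alpha * x ^ 2)); apply Rmult_lt_0_compat; lra. }
  unfold T_op; rewrite Rabs_mult, Rabs_inv, (Rabs_pos_eq _ (Rlt_le _ _ HD)).
  apply (Rmult_le_reg_l _ _ _ HD); rewrite <- Rmult_assoc, Rinv_r by lra; lra.
Qed.

Lemma T_op_continuity_pt (x0 : R) : 0 <= x0 -> continuity_pt (T_op alpha mu n f) x0.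
Proof.
  intro Hx0.
  set (coef := fun k => h_mu mu k (INR n) alpha / gamma_mu mu k
                        * f ((INR k + 2 * mu * theta k) / INR n)).
  assert (Hnum : (fun x => Series (T_term alpha mu n f x)) = PSeries coef).
  { apply functional_extensionality; intro x; apply Series_ext; intro k.
    unfold T_term, coef; ring. }
  assert (Hden : (fun x => e_mu mu (INR n * x))
                 = comp (PSeries (fun k => / gamma_mu mu k)) (fun x => INR n * x)).
  { apply functional_extensionality; intro x; apply Series_ext; intro k.
    unfold Rdiv; ring. }
  assert (Cnum : continuity_pt (fun x => Series (T_term alpha mu n f x)) x0).
  { rewrite Hnum; apply PSeries_continuity, CV_radius_infinite; intros r Hr.
    eapply ex_series_ext; [|apply (ex_series_abs_T_term r Hr)].
    intro k; unfold T_term, coef; f_equal; ring. }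
  assert (Cden : continuity_pt (fun x => e_mu mu (INR n * x)) x0).
  { rewrite Hden; apply continuity_pt_comp.
    - apply derivable_continuous_pt, ex_derive_Reals_0; auto_derive; trivial.
    - apply PSeries_continuity, CV_radius_infinite; intros r _.
      eapply ex_series_ext; [|apply (e_mu_series mu Hmu (Rabs r) (Rabs_pos r))].
      intro k; pose proof (gamma_mu_pos mu Hmu k); unfold e_mu_term.
      rewrite Rabs_mult, RPow_abs, Rabs_inv, (Rabs_pos_eq (gamma_mu mu k)) by lra.
      unfold Rdiv; apply Rmult_comm. }
  assert (Cexp : continuity_pt (fun x => exp (alpha * x ^ 2)) x0)
    by (apply derivable_continuous_pt, ex_derive_Reals_0; auto_derive; trivial).
  pose proof (e_mu_ge_1 mu Hmu (INR n * x0) ltac:(apply Rmult_le_pos; [apply pos_INR|lra])).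
  pose proof (exp_pos (alpha * x0 ^ 2)).
  apply continuity_pt_mult; [|exact Cnum].
  apply continuity_pt_inv; [apply continuity_pt_mult; assumption|].
  apply Rgt_not_eq, Rmult_lt_0_compat; lra.
Qed.

End BoundedData.

End Weights.

Theorem mainTheorem5 (alpha mu : R) (n : nat) :
  0 <= alpha -> 0 <= mu -> (0 < n)%nat ->
  forall f : R -> R, in_CB f ->
    (forall x, 0 <= x -> ex_series (T_term alpha mu n f x)) /\
    in_CB (T_op alpha mu n f) /\
    Rbar_le (sup_norm (T_op alpha mu n f)) (sup_norm f).
Proof.
  intros Halpha Hmu Hn f [_ [M HfM]].
  split; [|split; [split|]].
  - intros x Hx; apply ex_series_Rabs, (ex_series_abs_T_term alpha mu n Halpha Hmu Hn f M HfM x Hx).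
  - apply continuity_pt_on_nonneg; intros x Hx.
    exact (T_op_continuity_pt alpha mu n Halpha Hmu Hn f M HfM x Hx).
  - exists M; exact (T_op_abs_le alpha mu n Halpha Hmu Hn f M HfM).
  - apply sup_norm_le; intros B HfB.
    exact (T_op_abs_le alpha mu n Halpha Hmu Hn f B HfB).
Qed.
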